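(* Let $k\in\mathbb{N}$ with $k\ge2$, let $t_0\ge0$, and let $g_0\in C^2([t_0,\infty))$ satisfy $$\lim_{t\to\infty}tg_0'(t)=\infty,\qquad \lim_{t\to\infty}\frac{g_0''(t)}{g_0'(t)^2}=0,$$ and suppose $tg_0'(t)$ is nondecreasing and $g_0'(t)/g_0(t)$ is nonincreasing for all $t\ge t_0$. Let $f:[0,\infty)\to[0,\infty)$ be continuously differentiable with $f(t)=\exp_k(g_0(t))$ for all large $t$. Then $f$ satisfies condition (H1) of the context with $q=1$ (with $t_0$ replaced by a suitably large number).
   Context: $\exp_1=\exp$ and $\exp_k(t)=\exp_{k-1}(\exp(t))$. For $f$ positive and $C^2$ on $[t_0,\infty)$ with $g=\log f$ there, condition (H1) means: (i) $g'(t)>0$ and $g''(t)>0$ for all $t\ge t_0$, and there is a pair $(q,p)$ with either $q=1$ and $p\in(0,\infty]$, or $q\in(1,\infty)$ and $p\in(0,\infty)$, such that $\lim_{t\to\infty}\frac{g'(t)^2}{g(t)g''(t)}=q$ and $\lim_{t\to\infty}\frac{tg'(t)}{g(t)}=p$; (ii) if $q=1$, then $tg'(t)/g(t)$ is nondecreasing on $[t_0,\infty)$ and there exist $m\in\mathbb{N}$ and $\hat g\in C^2([t_0,\infty))$ with $f=\exp_m\circ\hat g$ and $\hat g'/\hat g$ nonincreasing on $[t_0,\infty)$. *)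

From Stdlib Require Import Reals.
From Coquelicot Require Import Coquelicot.
Open Scope R_scope.

Fixpoint exp_iter (k : nat) (t : R) : R :=
  match k with
  | O => t
  | S k' => exp_iter k' (exp t)
  end.

Definition deriv_on (a : R) (h h' : R -> R) : Prop :=
  forall t, a <= t ->
    filterlim (fun s => (h s - h t) / (s - t))
      (within (fun s => a <= s /\ s <> t) (locally t)) (locally (h' t)).

Definition cont_on (a : R) (h : R -> R) : Prop :=
  forall t, a <= t ->
    filterlim h (within (fun s => a <= s) (locally t)) (locally (h t)).

Definition C2_with (a : R) (h h1 h2 : R -> R) : Prop :=
  deriv_on a h h1 /\ deriv_on a h1 h2 /\ cont_on a h2.

Definition C2_on (a : R) (h : R -> R) : Prop :=
  exists h1 h2, C2_with a h h1 h2.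

Definition C1_on (a : R) (h : R -> R) : Prop :=
  exists h1, deriv_on a h h1 /\ cont_on a h1.

Definition nondecr_on (a : R) (h : R -> R) : Prop :=
  forall s t, a <= s -> s <= t -> h s <= h t.

Definition nonincr_on (a : R) (h : R -> R) : Prop :=
  forall s t, a <= s -> s <= t -> h t <= h s.

Definition H1 (f : R -> R) (t0 : R) (q : R) (p : Rbar) : Prop :=
  (forall t, t0 <= t -> 0 < f t) /\ C2_on t0 f /\
  exists g1 g2 : R -> R,
    C2_with t0 (fun t => ln (f t)) g1 g2 /\
    (forall t, t0 <= t -> 0 < g1 t /\ 0 < g2 t) /\
    ((q = 1 /\ Rbar_lt 0 p) \/ (1 < q /\ is_finite p /\ Rbar_lt 0 p)) /\
    is_lim (fun t => (g1 t) ^ 2 / (ln (f t) * g2 t)) p_infty q /\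
    is_lim (fun t => t * g1 t / ln (f t)) p_infty p /\
    (q = 1 ->
       nondecr_on t0 (fun t => t * g1 t / ln (f t)) /\
       exists (m : nat) (gh gh1 gh2 : R -> R),
         (1 <= m)%nat /\ C2_with t0 gh gh1 gh2 /\
         (forall t, t0 <= t -> f t = exp_iter m (gh t)) /\
         nonincr_on t0 (fun t => gh1 t / gh t)).

From Stdlib Require Import Reals Lra Lia.
From Coquelicot Require Import Coquelicot.
Open Scope R_scope.

(* Near infinity [ln f = exp o U] with [U = exp_(k-2) o g0].  For [G = exp o U]
   one has [G'/G = U'] and [G''/G = U'^2 + U''], so [G'^2/(G G'') = 1/(1 + U''/U'^2)]
   and [t G'/G = t U'].  Each exponential layer preserves both [U''/U'^2 -> 0]
   (the new ratio is [(1 + U''/U'^2)/exp U], and [U -> +oo] because [t g0' -> +oo])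
   and the monotone growth of [t U'] (the new value is [exp U * t U']).  Hence
   [q = 1], [p = +oo], and (ii) holds with [m = k] and [gh = g0]. *)

Lemma derivable_pt_lim_of_deriv_on a h h' t :
  deriv_on a h h' -> a < t -> derivable_pt_lim h t (h' t).
Proof.
intros Hd Ht eps Heps.
destruct (proj1 (filterlim_locally _ _) (Hd t (Rlt_le _ _ Ht)) (mkposreal eps Heps))
  as [d Hdd].
assert (Hpos : 0 < Rmin d (t - a)) by (apply Rmin_pos; [apply cond_pos | lra]).
exists (mkposreal _ Hpos); intros u Hu0 Hu; simpl in Hu.
destruct (Rmin_Rgt_l _ _ _ Hu) as [Hud Hua].
assert (Hball : ball t d (t + u)).
{ change (Rabs (t + u - t) < d). now replace (t + u - t) with u by ring. }
assert (Hdom : a <= t + u /\ t + u <> t).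
{ split; [destruct (Rabs_def2 _ _ Hua); lra | intro; apply Hu0; lra]. }
specialize (Hdd _ Hball Hdom); change (Rabs ((h (t + u) - h t) / (t + u - t) - h' t) < eps) in Hdd.
now replace (t + u - t) with u in Hdd by ring.
Qed.

Lemma deriv_on_of_derivable_pt_lim a h H h' :
  (forall t, a <= t -> h t = H t) ->
  (forall t, a <= t -> derivable_pt_lim H t (h' t)) -> deriv_on a h h'.
Proof.
intros Heq Hd t Ht; apply filterlim_locally; intros eps.
destruct (Hd t Ht eps (cond_pos eps)) as [d Hdd].
exists d; intros s Hs [Has Hst].
change (Rabs ((h s - h t) / (s - t) - h' t) < eps).
change (Rabs (s - t) < d) in Hs.
rewrite (Heq s Has), (Heq t Ht).
replace s with (t + (s - t)) at 1 by ring.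
apply Hdd; [lra | exact Hs].
Qed.

Lemma continuity_pt_of_cont_on a h t : cont_on a h -> a < t -> continuity_pt h t.
Proof.
intros Hc Ht; apply continuity_pt_filterlim, filterlim_locally; intros eps.
destruct (proj1 (filterlim_locally _ _) (Hc t (Rlt_le _ _ Ht)) eps) as [d Hdd].
assert (Hpos : 0 < Rmin d (t - a)) by (apply Rmin_pos; [apply cond_pos | lra]).
exists (mkposreal _ Hpos); intros s Hs.
change (Rabs (s - t) < Rmin d (t - a)) in Hs.
destruct (Rmin_Rgt_l _ _ _ Hs) as [Hsd Hsa].
apply Hdd; [exact Hsd | destruct (Rabs_def2 _ _ Hsa); lra].
Qed.

Lemma cont_on_of_continuity_pt a h H :
  (forall t, a <= t -> h t = H t) ->
  (forall t, a <= t -> continuity_pt H t) -> cont_on a h.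
Proof.
intros Heq Hc t Ht; apply filterlim_locally; intros eps.
destruct (proj1 (filterlim_locally _ _) (proj1 (continuity_pt_filterlim _ _) (Hc t Ht)) eps)
  as [d Hdd].
exists d; intros s Hs Has.
rewrite (Heq s Has), (Heq t Ht); exact (Hdd s Hs).
Qed.

Definition C2_open (a : R) (h h1 h2 : R -> R) : Prop :=
  forall t, a < t ->
    derivable_pt_lim h t (h1 t) /\ derivable_pt_lim h1 t (h2 t) /\ continuity_pt h2 t.

Lemma C2_open_of_C2_with a h h1 h2 : C2_with a h h1 h2 -> C2_open a h h1 h2.
Proof.
intros [D1 [D2 C]] t Ht; split; [|split].
- exact (derivable_pt_lim_of_deriv_on _ _ _ _ D1 Ht).
- exact (derivable_pt_lim_of_deriv_on _ _ _ _ D2 Ht).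
- exact (continuity_pt_of_cont_on _ _ _ C Ht).
Qed.

Lemma C2_with_of_C2_open a b h H h1 h2 : a < b ->
  (forall t, b <= t -> h t = H t) -> C2_open a H h1 h2 -> C2_with b h h1 h2.
Proof.
intros Hab Heq HC; split; [|split].
- apply (deriv_on_of_derivable_pt_lim _ _ H); [exact Heq | intros t Ht; apply HC; lra].
- apply (deriv_on_of_derivable_pt_lim _ _ h1); [easy | intros t Ht; apply HC; lra].
- apply (cont_on_of_continuity_pt _ _ h2); [easy | intros t Ht; apply HC; lra].
Qed.

Lemma C2_open_exp a h h1 h2 : C2_open a h h1 h2 ->
  C2_open a (fun t => exp (h t)) (fun t => exp (h t) * h1 t)
    (fun t => exp (h t) * (h1 t ^ 2 + h2 t)).
Proof.
intros HC t Ht.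
assert (Dexp : forall s, a < s -> derivable_pt_lim (fun t => exp (h t)) s (exp (h s) * h1 s)).
{ intros s Hs.
  exact (derivable_pt_lim_comp h exp _ _ _ (proj1 (HC s Hs)) (derivable_pt_lim_exp (h s))). }
destruct (HC t Ht) as [_ [D2 C2]].
assert (Cexp : continuity_pt (fun t => exp (h t)) t)
  by (apply derivable_continuous_pt; exists (exp (h t) * h1 t); exact (Dexp t Ht)).
assert (C1 : continuity_pt h1 t)
  by (apply derivable_continuous_pt; exists (h2 t); exact D2).
split; [|split].
- exact (Dexp t Ht).
- replace (exp (h t) * (h1 t ^ 2 + h2 t))
    with (exp (h t) * h1 t * h1 t + exp (h t) * h2 t) by ring.
  exact (derivable_pt_lim_mult (fun t => exp (h t)) h1 t _ _ (Dexp t Ht) D2).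
- apply (continuity_pt_mult (fun t => exp (h t))); [exact Cexp|].
  apply (continuity_pt_plus (fun t => h1 t ^ 2)); [|exact C2].
  change (continuity_pt (fun t => h1 t * (h1 t * 1)) t).
  apply (continuity_pt_mult h1); [exact C1|].
  apply (continuity_pt_mult h1 (fun _ => 1)); [exact C1 | apply continuity_pt_const; now intros ? ?].
Qed.

Lemma eventually_gt_of_to_infty f M :
  is_lim f p_infty p_infty -> Rbar_locally p_infty (fun t => M < f t).
Proof. intros Hf; apply (Hf (fun y => M < y)); now exists M. Qed.

Lemma eventually_near_of_lim f (l : R) (eps : posreal) :
  is_lim f p_infty l -> Rbar_locally p_infty (fun t => Rabs (f t - l) < eps).
Proof. intros Hf; exact (Hf _ (locally_ball l eps)). Qed.

Lemma eventually_forall_ge (P : R -> Prop) :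
  Rbar_locally p_infty P -> Rbar_locally p_infty (fun a => forall t, a <= t -> P t).
Proof. intros [M HM]; exists M; intros a Ha t Ht; apply HM; lra. Qed.

Lemma eventually_pos_of_mult_id_to_infty h :
  is_lim (fun t => t * h t) p_infty p_infty -> Rbar_locally p_infty (fun t => 0 < h t).
Proof.
intros Hl.
apply (filter_imp (fun t => 0 < t /\ 0 < t * h t)).
- intros t [Ht Hth]; apply (Rmult_lt_reg_l t); lra.
- apply filter_and; [now exists 0 | exact (eventually_gt_of_to_infty _ 0 Hl)].
Qed.

Lemma eventually_sq_plus_pos u v :
  is_lim (fun t => v t / u t ^ 2) p_infty 0 -> Rbar_locally p_infty (fun t => 0 < u t) ->
  Rbar_locally p_infty (fun t => 0 < u t ^ 2 + v t).
Proof.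
intros Hr Hu.
apply (filter_imp (fun t => Rabs (v t / u t ^ 2 - 0) < 1 /\ 0 < u t)).
- intros t [Hlt Hut].
  rewrite Rminus_0_r in Hlt; destruct (Rabs_def2 _ _ Hlt) as [_ Hgt].
  assert (Hsq : 0 < u t ^ 2) by (apply pow_lt, Hut).
  replace (u t ^ 2 + v t) with (u t ^ 2 * (1 + v t / u t ^ 2)) by (field; lra).
  apply Rmult_lt_0_compat; lra.
- exact (filter_and _ _ (eventually_near_of_lim _ _ (mkposreal 1 Rlt_0_1) Hr) Hu).
Qed.

Lemma nondecr_on_ext a u v :
  (forall t, a <= t -> u t = v t) -> nondecr_on a u -> nondecr_on a v.
Proof. intros Heq Hu s t Hs Hst; rewrite <- !Heq by lra; exact (Hu s t Hs Hst). Qed.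

Lemma nondecr_on_of_deriv_pos a h h1 :
  (forall t, a <= t -> derivable_pt_lim h t (h1 t)) -> (forall t, a <= t -> 0 < h1 t) ->
  nondecr_on a h.
Proof.
intros Hd Hp s t Hs Hst.
destruct (Rle_lt_or_eq_dec _ _ Hst) as [Hlt | <-]; [left | now right].
apply (incr_function_le h a p_infty h1); try easy.
- intros x Hx _; apply is_derive_Reals, Hd, Hx.
- intros x Hx _; apply Hp, Hx.
Qed.

Lemma nondecr_on_exp a h : nondecr_on a h -> nondecr_on a (fun t => exp (h t)).
Proof.
intros Hh s t Hs Hst.
destruct (Rle_lt_or_eq_dec _ _ (Hh s t Hs Hst)) as [Hlt | ->]; [left | now right].
now apply exp_increasing.
Qed.

Lemma nondecr_on_mult a u v :
  (forall t, a <= t -> 0 <= u t) -> (forall t, a <= t -> 0 <= v t) ->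
  nondecr_on a u -> nondecr_on a v -> nondecr_on a (fun t => u t * v t).
Proof.
intros Hu Hv Hmu Hmv s t Hs Hst.
apply Rmult_le_compat; auto.
Qed.

(* [h - ln] has a positive derivative once [t h' t > 1]. *)
Lemma to_infty_of_mult_id_deriv_to_infty a h h1 :
  (forall t, a < t -> derivable_pt_lim h t (h1 t)) ->
  is_lim (fun t => t * h1 t) p_infty p_infty -> is_lim h p_infty p_infty.
Proof.
intros Hd Hl.
destruct (eventually_gt_of_to_infty _ 1 Hl) as [N HN].
set (b := Rmax (Rmax a 0) N + 1).
assert (Hb : a < b /\ 0 < b /\ N < b).
{ unfold b; pose proof (Rmax_l (Rmax a 0) N); pose proof (Rmax_r (Rmax a 0) N).
  pose proof (Rmax_l a 0); pose proof (Rmax_r a 0); lra. }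
assert (Hmono : nondecr_on b (fun t => h t - ln t)).
{ apply (nondecr_on_of_deriv_pos _ _ (fun t => h1 t - / t)).
  - intros t Ht; apply derivable_pt_lim_minus; [apply Hd | apply derivable_pt_lim_ln]; lra.
  - intros t Ht; specialize (HN t ltac:(lra)).
    replace (h1 t - / t) with ((t * h1 t - 1) / t) by (field; lra).
    apply Rdiv_lt_0_compat; lra. }
apply (is_lim_le_p_loc (fun t => ln t + (h b - ln b))).
- exists b; intros t Ht; pose proof (Hmono b t (Rle_refl b) (Rlt_le _ _ Ht)); lra.
- eapply is_lim_plus; [apply is_lim_ln_p | apply is_lim_const | easy].
Qed.

Lemma exp_ratio_to_0 h h1 h2 :
  is_lim h p_infty p_infty -> Rbar_locally p_infty (fun t => 0 < h1 t) ->
  is_lim (fun t => h2 t / h1 t ^ 2) p_infty 0 ->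
  is_lim (fun t => exp (h t) * (h1 t ^ 2 + h2 t) / (exp (h t) * h1 t) ^ 2) p_infty 0.
Proof.
intros Hh Hpos Hr.
apply (is_lim_ext_loc (fun t => (1 + h2 t / h1 t ^ 2) / exp (h t))).
- apply (filter_imp (fun t => 0 < h1 t)); [|exact Hpos].
  intros t Ht; pose proof (exp_pos (h t)); field; lra.
- replace (Finite 0) with (Rbar_div (Finite (1 + 0)) p_infty) by (simpl; f_equal; ring).
  apply is_lim_div; try easy.
  + apply (is_lim_plus' (fun _ => 1)); [apply is_lim_const | exact Hr].
  + apply (is_lim_comp exp h p_infty p_infty p_infty is_lim_exp_p Hh).
    now exists 0.
Qed.

Lemma mult_id_exp_to_infty h h1 :
  is_lim h p_infty p_infty -> is_lim (fun t => t * h1 t) p_infty p_infty ->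
  is_lim (fun t => t * (exp (h t) * h1 t)) p_infty p_infty.
Proof.
intros Hh Hl.
apply (is_lim_le_p_loc (fun t => t * h1 t)); [|exact Hl].
apply (filter_imp (fun t => 0 < h t /\ 0 < t * h1 t)).
- intros t [Hht Hth].
  assert (1 < exp (h t)) by (rewrite <- exp_0; now apply exp_increasing).
  nra.
- apply filter_and; [apply eventually_gt_of_to_infty, Hh | apply eventually_gt_of_to_infty, Hl].
Qed.

Lemma exp_iter_S n x : exp_iter (S n) x = exp (exp_iter n x).
Proof.
revert x; induction n as [|n IHn]; intros x; [easy|].
change (exp_iter (S n) (exp x) = exp (exp_iter (S n) x)); now rewrite IHn.
Qed.

Section Tower.

Variables g g' g'' : R -> R.

Fixpoint tower (n : nat) : R -> R :=
  match n with O => g | S n => fun t => exp (tower n t) end.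

Fixpoint tower' (n : nat) : R -> R :=
  match n with O => g' | S n => fun t => exp (tower n t) * tower' n t end.

Fixpoint tower'' (n : nat) : R -> R :=
  match n with
  | O => g''
  | S n => fun t => exp (tower n t) * (tower' n t ^ 2 + tower'' n t)
  end.

Lemma exp_iter_tower n t : exp_iter n (g t) = tower n t.
Proof. induction n as [|n IHn]; [easy|]; simpl tower; now rewrite exp_iter_S, IHn. Qed.

Lemma C2_open_tower a n : C2_open a g g' g'' -> C2_open a (tower n) (tower' n) (tower'' n).
Proof. intros HC; induction n as [|n IHn]; [exact HC | exact (C2_open_exp _ _ _ _ IHn)]. Qed.

Lemma tower'_pos n t : 0 < g' t -> 0 < tower' n t.
Proof.
intros Hg; induction n as [|n IHn]; [exact Hg|].
apply Rmult_lt_0_compat; [apply exp_pos | exact IHn].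
Qed.

Lemma eventually_tower'_pos n :
  Rbar_locally p_infty (fun t => 0 < g' t) -> Rbar_locally p_infty (fun t => 0 < tower' n t).
Proof. apply filter_imp; intros t; apply tower'_pos. Qed.

Lemma tower_nondecr a n : nondecr_on a g -> nondecr_on a (tower n).
Proof. intros Hg; induction n as [|n IHn]; [exact Hg | exact (nondecr_on_exp _ _ IHn)]. Qed.

Lemma mult_id_tower'_nondecr a n :
  0 <= a -> nondecr_on a g -> (forall t, a <= t -> 0 < g' t) ->
  nondecr_on a (fun t => t * g' t) -> nondecr_on a (fun t => t * tower' n t).
Proof.
intros Ha Hg Hpos Hm; induction n as [|n IHn]; [exact Hm|].
apply (nondecr_on_ext _ (fun t => exp (tower n t) * (t * tower' n t))).
{ intros t _; simpl; ring. }
apply nondecr_on_mult; [| | apply nondecr_on_exp, tower_nondecr, Hg | exact IHn].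
- intros t _; left; apply exp_pos.
- intros t Ht; apply Rmult_le_pos; [lra | left; apply tower'_pos, Hpos, Ht].
Qed.

Hypothesis g_to_infty : is_lim g p_infty p_infty.

Lemma tower_to_infty n : is_lim (tower n) p_infty p_infty.
Proof.
induction n as [|n IHn]; [exact g_to_infty|].
apply (is_lim_comp exp (tower n) p_infty p_infty p_infty is_lim_exp_p IHn).
now exists 0.
Qed.

Lemma tower_ratio_to_0 n :
  Rbar_locally p_infty (fun t => 0 < g' t) ->
  is_lim (fun t => g'' t / g' t ^ 2) p_infty 0 ->
  is_lim (fun t => tower'' n t / tower' n t ^ 2) p_infty 0.
Proof.
intros Hpos Hr; induction n as [|n IHn]; [exact Hr|].
exact (exp_ratio_to_0 _ _ _ (tower_to_infty n) (eventually_tower'_pos n Hpos) IHn).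
Qed.

Lemma mult_id_tower'_to_infty n :
  is_lim (fun t => t * g' t) p_infty p_infty ->
  is_lim (fun t => t * tower' n t) p_infty p_infty.
Proof.
intros Hl; induction n as [|n IHn]; [exact Hl|].
exact (mult_id_exp_to_infty _ _ (tower_to_infty n) IHn).
Qed.

End Tower.

Lemma H1_of_ln_eq_exp f U U' U'' a t1 :
  a < t1 -> C2_open a U U' U'' ->
  (forall t, t1 <= t -> f t = exp (exp (U t))) ->
  (forall t, t1 <= t -> 0 < U' t /\ 0 < U' t ^ 2 + U'' t) ->
  is_lim (fun t => U'' t / U' t ^ 2) p_infty 0 ->
  is_lim (fun t => t * U' t) p_infty p_infty ->
  nondecr_on t1 (fun t => t * U' t) ->
  (exists (m : nat) (gh gh1 gh2 : R -> R),
     (1 <= m)%nat /\ C2_with t1 gh gh1 gh2 /\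
     (forall t, t1 <= t -> f t = exp_iter m (gh t)) /\
     nonincr_on t1 (fun t => gh1 t / gh t)) ->
  H1 f t1 1 p_infty.
Proof.
intros Hat1 HC Hf Hpos Hr Hl Hm Hrepr.
assert (Hln : forall t, t1 <= t -> ln (f t) = exp (U t))
  by (intros t Ht; rewrite Hf by exact Ht; apply ln_exp).
assert (Hnear : forall P : R -> Prop, (forall t, t1 <= t -> P t) -> Rbar_locally p_infty P)
  by (intros P HP; exists t1; intros t Ht; apply HP; lra).
split; [|split].
- intros t Ht; rewrite Hf by exact Ht; apply exp_pos.
- eexists; eexists.
  exact (C2_with_of_C2_open _ _ _ _ _ _ Hat1 Hf (C2_open_exp _ _ _ _ (C2_open_exp _ _ _ _ HC))).
- exists (fun t => exp (U t) * U' t), (fun t => exp (U t) * (U' t ^ 2 + U'' t)).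
  split; [exact (C2_with_of_C2_open _ _ _ _ _ _ Hat1 Hln (C2_open_exp _ _ _ _ HC))|].
  split; [|split; [left; easy | split; [|split]]].
  + intros t Ht; destruct (Hpos t Ht); split; apply Rmult_lt_0_compat; auto; apply exp_pos.
  + apply (is_lim_ext_loc (fun t => / (1 + U'' t / U' t ^ 2))).
    * apply Hnear; intros t Ht; rewrite Hln by exact Ht.
      destruct (Hpos t Ht); pose proof (exp_pos (U t)).
      field; repeat split; try lra.
    * replace (Finite 1) with (Rbar_inv (Finite (1 + 0))) by (simpl; f_equal; field).
      apply is_lim_inv; [|simpl; intros E; injection E; lra].
      apply (is_lim_plus' (fun _ => 1)); [apply is_lim_const | exact Hr].
  + apply (is_lim_ext_loc (fun t => t * U' t)); [|exact Hl].
    apply Hnear; intros t Ht; rewrite Hln by exact Ht.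
    pose proof (exp_pos (U t)); field; lra.
  + intros _; split; [|exact Hrepr].
    apply (nondecr_on_ext _ (fun t => t * U' t)); [|exact Hm].
    intros t Ht; rewrite Hln by exact Ht; pose proof (exp_pos (U t)); field; lra.
Qed.

Theorem lemma2p11 (k : nat) (t0 : R) (g0 g0' g0'' f : R -> R) :
  (2 <= k)%nat -> 0 <= t0 ->
  C2_with t0 g0 g0' g0'' ->
  is_lim (fun t => t * g0' t) p_infty p_infty ->
  is_lim (fun t => g0'' t / (g0' t) ^ 2) p_infty 0 ->
  nondecr_on t0 (fun t => t * g0' t) ->
  nonincr_on t0 (fun t => g0' t / g0 t) ->
  (forall t, 0 <= t -> 0 <= f t) ->
  C1_on 0 f ->
  (exists T, forall t, T <= t -> f t = exp_iter k (g0 t)) ->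
  exists (t1 : R) (p : Rbar), H1 f t1 1 p.
Proof.
intros Hk Ht0 HC Hl Hr Hnd Hni _ _ [T HT].
destruct k as [|[|m]]; [lia | lia |].
assert (HCo := C2_open_of_C2_with _ _ _ _ HC).
assert (Hpos := eventually_pos_of_mult_id_to_infty _ Hl).
assert (Hinf := to_infty_of_mult_id_deriv_to_infty _ _ _ (fun t Ht => proj1 (HCo t Ht)) Hl).
assert (Hrm := tower_ratio_to_0 _ _ _ Hinf m Hpos Hr).
assert (Hsq := eventually_sq_plus_pos _ _ Hrm (eventually_tower'_pos g0 g0' m Hpos)).
assert (Hev : Rbar_locally p_infty (fun a => (Rmax t0 T < a /\ 0 < a) /\
   forall t, a <= t -> 0 < g0' t /\ 0 < tower' g0 g0' m t ^ 2 + tower'' g0 g0' g0'' m t)).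
{ apply filter_and; [apply filter_and; [now exists (Rmax t0 T) | now exists 0]|].
  now apply eventually_forall_ge, filter_and. }
destruct (filter_ex _ Hev) as [t1 [[Ht0T Ht1] Hge]].
pose proof (Rmax_l t0 T); pose proof (Rmax_r t0 T).
exists t1, p_infty.
apply (H1_of_ln_eq_exp f (tower g0 m) (tower' g0 g0' m) (tower'' g0 g0' g0'' m) t0 t1).
- lra.
- exact (C2_open_tower _ _ _ _ m HCo).
- intros t Ht; rewrite HT by lra; exact (exp_iter_tower g0 (S (S m)) t).
- intros t Ht; split; [apply tower'_pos|]; apply Hge, Ht.
- exact Hrm.
- exact (mult_id_tower'_to_infty _ _ Hinf m Hl).
- apply mult_id_tower'_nondecr; [lra | | intros t Ht; apply Hge, Ht |].
  + apply (nondecr_on_of_deriv_pos _ _ g0'); [intros t Ht; apply HCo; lra | intros t Ht; apply Hge, Ht].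
  + intros s t Hs Hst; apply Hnd; lra.
- exists (S (S m)), g0, g0', g0''; split; [lia|split; [|split]].
  + exact (C2_with_of_C2_open _ _ _ _ _ _ (ltac:(lra) : t0 < t1) (fun t _ => eq_refl) HCo).
  + intros t Ht; apply HT; lra.
  + intros s t Hs Hst; apply Hni; lra.
Qed.
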